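(* Let $(X,d)$ be a totally bounded metric space, $\emptyset\ne F\subseteq X$ with representation $(\tilde F_k)$, and let $(x_n)$ be a Cauchy sequence in $X$ with a selfmajorizing rate of metastability $\Psi$. (i) Assume $(x_n)$ is asymptotically regular w.r.t. $F$ with $\Phi^+$ a selfmajorizing rate of metastability for the asymptotic regularity. Then for all $k\in\mathbb{N}$ and $g:\mathbb{N}\to\mathbb{N}$ there exists $N\le\Omega_{k,g}(\Psi,\Phi^+)$ such that for all $i,j\in[N,N+g(N)]$: $d(x_i,x_j)\le\frac1{k+1}$ and $x_i\in AF_k$. (ii) Assume $(x_n)$ is asymptotically regular w.r.t. $F$ with $\Phi^{++}$ a rate of asymptotic regularity. Then for all $k\in\mathbb{N}$ and $g:\mathbb{N}\to\mathbb{N}$ there exists $N\le\tilde\Omega_{k,g}(\Psi,(\Phi^{++})^M)$ such that $d(x_i,x_j)\le\frac1{k+1}$ for all $i,j\in[N,N+g(N)]$ and $x_m\in AF_k$ for all $m\ge N$.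
   Context: Representation: $F=\bigcap_k\tilde F_k$, $AF_k:=\bigcap_{l\le k}\tilde F_l$. A rate of metastability for $(x_n)$ is $\Psi:\mathbb{N}\times\mathbb{N}^{\mathbb{N}}\to\mathbb{N}$ such that for all $k,g$ there is $N\le\Psi(k,g)$ with $d(x_i,x_j)\le\frac1{k+1}$ for all $i,j\in[N,N+g(N)]$. $(x_n)$ is asymptotically regular w.r.t. $F$ if for all $k$ there is $N$ with $x_m\in AF_k$ for all $m\ge N$; a rate of metastability for this is $\Phi^+:\mathbb{N}\times\mathbb{N}^{\mathbb{N}}\to\mathbb{N}$ such that for all $k,g$ there is $N\le\Phi^+(k,g)$ with $x_m\in AF_k$ for all $m\in[N,N+g(N)]$; a rate of asymptotic regularity is $\Phi^{++}:\mathbb{N}\to\mathbb{N}$ with $x_n\in AF_k$ for all $n\ge\Phi^{++}(k)$. For $f:\mathbb{N}\to\mathbb{N}$, $f^M(n):=\max\{f(i)\mid i\le n\}$. For $f,f':\mathbb{N}\to\mathbb{N}$, $f'\gtrsim f$ means: for all $n^*\ge n$, $f'(n^* )\ge f'(n)$ and $f'(n^* )\ge f(n)$. For $\Phi,\Phi^*:\mathbb{N}\times\mathbb{N}^{\mathbb{N}}\to\mathbb{N}$, $\Phi^*\gtrsim\Phi$ means: for all $k,k'\in\mathbb{N}$ and $g,g':\mathbb{N}\to\mathbb{N}$ with $k'\ge k$ and $g'\gtrsim g$, $\Phi^*(k',g')\ge\Phi^*(k,g)$ and $\Phi^*(k',g')\ge\Phi(k,g)$; $\Phi$ is selfmajorizing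 if $\Phi\gtrsim\Phi$. Given $k$ and $g$: $g^*(n):=n+g^M(n)$; $\tilde g_l(m):=g^*(\max\{l,m\})$; for $\delta:\mathbb{N}\times\mathbb{N}^{\mathbb{N}}\to\mathbb{N}$, $h_{k,g,\delta}(n):=g^*(\max\{n,\delta(k,\tilde g_n)\})$; $\Omega_{k,g}(\delta,\theta):=\max\{\delta(k,h_{k,g,\theta}),\ \theta(k,\tilde g_{\delta(k,h_{k,g,\theta})})\}$; $g_l(n):=g^M(n+l)+l$; $\tilde\Omega_{k,g}(\delta,f):=\delta(k,g_{f(k)})+f(k)$ for $f:\mathbb{N}\to\mathbb{N}$. *)

From Stdlib Require Import Reals Lia List.
Open Scope R_scope.

Definition is_metric {X : Type} (d : X -> X -> R) : Prop :=
  (forall x y, 0 <= d x y) /\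
  (forall x y, d x y = 0 <-> x = y) /\
  (forall x y, d x y = d y x) /\
  (forall x y z, d x z <= d x y + d y z).

Definition totally_bounded {X : Type} (d : X -> X -> R) : Prop :=
  forall eps : R, 0 < eps ->
    exists l : list X, forall x : X, exists y, In y l /\ d x y < eps.

Definition cauchy_seq {X : Type} (d : X -> X -> R) (x : nat -> X) : Prop :=
  forall eps : R, 0 < eps ->
    exists N : nat, forall i j : nat, (N <= i)%nat -> (N <= j)%nat -> d (x i) (x j) < eps.

Definition is_representation {X : Type} (F : X -> Prop) (Ft : nat -> X -> Prop) : Prop :=
  forall x, F x <-> (forall k, Ft k x).

Definition AF {X : Type} (Ft : nat -> X -> Prop) (k : nat) (x : X) : Prop :=
  forall l : nat, (l <= k)%nat -> Ft l x.

Fixpoint fM (f : nat -> nat) (n : nat) : nat :=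
  match n with
  | O => f O
  | S m => Nat.max (fM f m) (f (S m))
  end.

Definition maj_fun (f' f : nat -> nat) : Prop :=
  forall n nstar : nat, (n <= nstar)%nat -> (f' n <= f' nstar)%nat /\ (f n <= f' nstar)%nat.

Definition maj_fun2 (Phistar Phi : nat -> (nat -> nat) -> nat) : Prop :=
  forall (k k' : nat) (g g' : nat -> nat), (k <= k')%nat -> maj_fun g' g ->
    (Phistar k g <= Phistar k' g')%nat /\ (Phi k g <= Phistar k' g')%nat.

Definition selfmajorizing (Phi : nat -> (nat -> nat) -> nat) : Prop := maj_fun2 Phi Phi.

Definition metastability_rate {X : Type} (d : X -> X -> R) (x : nat -> X)
    (Psi : nat -> (nat -> nat) -> nat) : Prop :=
  forall (k : nat) (g : nat -> nat), exists N : nat, (N <= Psi k g)%nat /\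
    forall i j : nat, (N <= i <= N + g N)%nat -> (N <= j <= N + g N)%nat ->
      d (x i) (x j) <= 1 / INR (S k).

Definition asymptotically_regular {X : Type} (Ft : nat -> X -> Prop) (x : nat -> X) : Prop :=
  forall k : nat, exists N : nat, forall m : nat, (N <= m)%nat -> AF Ft k (x m).

Definition AR_metastability_rate {X : Type} (Ft : nat -> X -> Prop) (x : nat -> X)
    (Phi : nat -> (nat -> nat) -> nat) : Prop :=
  forall (k : nat) (g : nat -> nat), exists N : nat, (N <= Phi k g)%nat /\
    forall m : nat, (N <= m <= N + g N)%nat -> AF Ft k (x m).

Definition AR_rate {X : Type} (Ft : nat -> X -> Prop) (x : nat -> X) (Phi : nat -> nat) : Prop :=
  forall k n : nat, (Phi k <= n)%nat -> AF Ft k (x n).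

Definition gstar (g : nat -> nat) (n : nat) : nat := (n + fM g n)%nat.
Definition gtilde (g : nat -> nat) (l m : nat) : nat := gstar g (Nat.max l m).
Definition hfun (k : nat) (g : nat -> nat) (delta : nat -> (nat -> nat) -> nat) (n : nat) : nat :=
  gstar g (Nat.max n (delta k (gtilde g n))).
Definition Omega (k : nat) (g : nat -> nat) (delta theta : nat -> (nat -> nat) -> nat) : nat :=
  Nat.max (delta k (hfun k g theta)) (theta k (gtilde g (delta k (hfun k g theta)))).
Definition gsub (g : nat -> nat) (l n : nat) : nat := (fM g (n + l) + l)%nat.
Definition Omega_tilde (k : nat) (g : nat -> nat) (delta : nat -> (nat -> nat) -> nat)
    (f : nat -> nat) : nat := (delta k (gsub g (f k)) + f k)%nat.

(* (i): apply the metastability of (x_n) to the counterfunction h_{k,g,Phi+}, which looks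
   far enough ahead that its window [N0, N0 + h N0] contains the window of asymptotic
   regularity obtained for g~_{N0}; both windows then contain [M, M + g M] for
   M = max N0 N1, and selfmajorizability of Phi+ bounds N1 uniformly in N0 <= Psi.
   (ii): apply the metastability of (x_n) to g_l with l = Phi++^M(k), which shifts the
   window by l, so that its shifted start already lies beyond the rate of regularity. *)
From Stdlib Require Import Reals Lia.
Open Scope R_scope.

Lemma le_fM (f : nat -> nat) (n : nat) : (f n <= fM f n)%nat.
Proof. destruct n; simpl; lia. Qed.

Lemma fM_monotone (f : nat -> nat) (n m : nat) : (n <= m)%nat -> (fM f n <= fM f m)%nat.
Proof. induction 1; simpl; lia. Qed.

Lemma gstar_monotone (g : nat -> nat) (n m : nat) :
  (n <= m)%nat -> (gstar g n <= gstar g m)%nat.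
Proof. intros Hnm; unfold gstar; pose proof (fM_monotone g n m Hnm); lia. Qed.

Lemma le_add_gstar (g : nat -> nat) (n : nat) : (n + g n <= gstar g n)%nat.
Proof. unfold gstar; pose proof (le_fM g n); lia. Qed.

Lemma gtilde_majorizes (g : nat -> nat) (l l' : nat) :
  (l <= l')%nat -> maj_fun (gtilde g l') (gtilde g l).
Proof. intros Hl n ns Hn; unfold gtilde; split; apply gstar_monotone; lia. Qed.

Lemma selfmajorizing_gtilde_le (Phi : nat -> (nat -> nat) -> nat) (k : nat)
    (g : nat -> nat) (l l' : nat) :
  selfmajorizing Phi -> (l <= l')%nat -> (Phi k (gtilde g l) <= Phi k (gtilde g l'))%nat.
Proof.
  intros HPhi Hl.
  exact (proj1 (HPhi k k _ _ (le_n k) (gtilde_majorizes g l l' Hl))).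
Qed.

Lemma AR_rate_fM {X : Type} (Ft : nat -> X -> Prop) (x : nat -> X) (Phi : nat -> nat) :
  AR_rate Ft x Phi -> AR_rate Ft x (fM Phi).
Proof. intros HPhi k n Hn; apply HPhi; pose proof (le_fM Phi k); lia. Qed.

Section JointMetastability.

Variables (X : Type) (d : X -> X -> R) (Ft : nat -> X -> Prop) (x : nat -> X).
Variable Psi : nat -> (nat -> nat) -> nat.
Hypothesis HPsi : metastability_rate d x Psi.

Lemma joint_metastability_AR_metastability (Phi : nat -> (nat -> nat) -> nat) :
  selfmajorizing Phi -> AR_metastability_rate Ft x Phi ->
  forall (k : nat) (g : nat -> nat), exists N : nat, (N <= Omega k g Psi Phi)%nat /\
    forall i j : nat, (N <= i <= N + g N)%nat -> (N <= j <= N + g N)%nat ->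
      d (x i) (x j) <= 1 / INR (S k) /\ AF Ft k (x i).
Proof.
  intros HPhi HAR k g.
  destruct (HPsi k (hfun k g Phi)) as [N0 [HN0 Hcauchy]].
  destruct (HAR k (gtilde g N0)) as [N1 [HN1 Hreg]].
  pose (M := Nat.max N0 N1).
  assert (HN1' : (N1 <= Phi k (gtilde g (Psi k (hfun k g Phi))))%nat).
  { pose proof (selfmajorizing_gtilde_le Phi k g _ _ HPhi HN0); lia. }
  assert (Hwindow : (M + g M <= gstar g M)%nat) by apply le_add_gstar.
  assert (Hcauchy_end : (gstar g M <= N0 + hfun k g Phi N0)%nat).
  { unfold hfun; pose proof (gstar_monotone g M (Nat.max N0 (Phi k (gtilde g N0)))
      ltac:(unfold M; lia)); lia. }
  assert (Hreg_end : (gstar g M <= N1 + gtilde g N0 N1)%nat) by (unfold gtilde, M; lia).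
  exists M; split.
  - unfold Omega, M; lia.
  - intros i j Hi Hj; split.
    + apply Hcauchy; unfold M in *; lia.
    + apply Hreg; unfold M in *; lia.
Qed.

Lemma joint_metastability_AR_rate (f : nat -> nat) :
  AR_rate Ft x f ->
  forall (k : nat) (g : nat -> nat), exists N : nat, (N <= Omega_tilde k g Psi f)%nat /\
    (forall i j : nat, (N <= i <= N + g N)%nat -> (N <= j <= N + g N)%nat ->
       d (x i) (x j) <= 1 / INR (S k)) /\
    (forall m : nat, (N <= m)%nat -> AF Ft k (x m)).
Proof.
  intros Hf k g.
  destruct (HPsi k (gsub g (f k))) as [N0 [HN0 Hcauchy]].
  exists (N0 + f k)%nat; split; [|split].
  - unfold Omega_tilde; lia.
  - pose proof (le_fM g (N0 + f k)).
    intros i j Hi Hj; apply Hcauchy; unfold gsub; lia.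
  - intros m Hm; apply Hf; lia.
Qed.

End JointMetastability.

Theorem theorem5p8 (X : Type) (d : X -> X -> R) (F : X -> Prop) (Ft : nat -> X -> Prop)
    (x : nat -> X) (Psi : nat -> (nat -> nat) -> nat) :
  is_metric d -> totally_bounded d ->
  (exists y, F y) -> is_representation F Ft ->
  cauchy_seq d x -> selfmajorizing Psi -> metastability_rate d x Psi ->
  (forall Phip : nat -> (nat -> nat) -> nat,
     asymptotically_regular Ft x -> selfmajorizing Phip -> AR_metastability_rate Ft x Phip ->
     forall (k : nat) (g : nat -> nat), exists N : nat, (N <= Omega k g Psi Phip)%nat /\
       forall i j : nat, (N <= i <= N + g N)%nat -> (N <= j <= N + g N)%nat ->
         d (x i) (x j) <= 1 / INR (S k) /\ AF Ft k (x i))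
  /\
  (forall Phipp : nat -> nat,
     asymptotically_regular Ft x -> AR_rate Ft x Phipp ->
     forall (k : nat) (g : nat -> nat), exists N : nat, (N <= Omega_tilde k g Psi (fM Phipp))%nat /\
       (forall i j : nat, (N <= i <= N + g N)%nat -> (N <= j <= N + g N)%nat ->
          d (x i) (x j) <= 1 / INR (S k)) /\
       (forall m : nat, (N <= m)%nat -> AF Ft k (x m))).
Proof.
  intros _ _ _ _ _ _ HPsi; split.
  - intros Phip _ HPhip HAR.
    exact (joint_metastability_AR_metastability X d Ft x Psi HPsi Phip HPhip HAR).
  - intros Phipp _ HAR.
    exact (joint_metastability_AR_rate X d Ft x Psi HPsi (fM Phipp) (AR_rate_fM Ft x Phipp HAR)).
Qed.
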